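(* Fix parameters $D_0>0$, $\alpha>0$, $p^a\ge 0$ and a weight $\gamma\in(0,1)$. For prices $p^s,p^c,p^d\in\mathbb{R}$ let $d(p^s,p^c)=\max\{D_0-\alpha(p^s+p^c),0\}$, $U_{ISP}=d(p^s,p^c)\,(p^s+p^d)$ and $U_{CP}=d(p^s,p^c)\,(p^c+p^a-p^d)$. In the ex ante regulation game, the following holds. (a) For every $p^d\in\mathbb{R}$, the simultaneous pricing game (ISP chooses $p^s$, CP chooses $p^c$) has exactly one pure-strategy Nash equilibrium with strictly positive demand, namely $$p^s=\frac{D_0+\alpha p^a}{3\alpha}-p^d,\qquad p^c=\frac{D_0-2\alpha p^a}{3\alpha}+p^d .$$ At this equilibrium: - the net internaut price is $p^s+p^c=\frac{2D_0-\alpha p^a}{3\alpha}$, independent of $p^d$; - the demand is $\frac{D_0+\alpha p^a}{3}>0$; - $U_{ISP}=U_{CP}=\frac{(D_0+\alpha p^a)^2}{9\alpha}$. Consequently $U_{ISP}^{\gamma}U_{CP}^{1-\gamma}$ at this equilibrium does not depend on $p^d$, so every $p^d\in\mathbb{R}$ is an optimal choice of the regulator. The equilibrium is therefore unique up to a free choice of $p^d$, and a payment $p^d$ lowers $p^s$ and raises $p^c$ by exactly $p^d$. (b) For each fixed $p^d$, a profile $(p^s,p^c)$ is a pure-strategy Nash equilibrium of the pricing game with zero demand if and only if $$p^s\ge D_0/\alpha+p^a-p^d\quad\text{and}\quad p^c\ge D_0/\alpha+p^d.$$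
   Context: Single ISP, single content provider (CP) model. - $p^s$ is the price per unit demand paid by internauts to the ISP, and $p^c$ the price per unit demand paid by internauts to the CP. Either may be negative. - $p^d$ is the payment per unit demand from the CP to the ISP, and may be negative. - $p^a\ge0$ is the advertising revenue per unit demand earned by the CP. Ex ante regulation game: 1. A regulator first sets $p^d$. 2. Then the ISP and the CP simultaneously choose $p^s$ and $p^c$, with payoffs $U_{ISP}$ and $U_{CP}$. 3. Internauts generate demand $d(p^s,p^c)$. The regulator chooses $p^d$ to maximize $U_{ISP}^{\gamma}\times U_{CP}^{1-\gamma}$, where $U_{ISP}$ and $U_{CP}$ are evaluated at the pure-strategy Nash equilibrium of the pricing game induced by that $p^d$. *)

From Stdlib Require Import Reals Lra.
Open Scope R_scope.

Definition demand (D0 alpha ps pc : R) : R := Rmax (D0 - alpha * (ps + pc)) 0.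

Definition U_ISP (D0 alpha pd ps pc : R) : R := demand D0 alpha ps pc * (ps + pd).

Definition U_CP (D0 alpha pa pd ps pc : R) : R :=
  demand D0 alpha ps pc * (pc + pa - pd).

Definition NashEq (D0 alpha pa pd ps pc : R) : Prop :=
  (forall ps', U_ISP D0 alpha pd ps' pc <= U_ISP D0 alpha pd ps pc) /\
  (forall pc', U_CP D0 alpha pa pd ps pc' <= U_CP D0 alpha pa pd ps pc).

(* Regulator's objective U_ISP^gamma * U_CP^(1-gamma) at a profile (ps,pc)
   (Rpower x y = exp (y ln x), meaningful for positive utilities). *)
Definition NashProduct (D0 alpha pa gamma pd ps pc : R) : R :=
  Rpower (U_ISP D0 alpha pd ps pc) gamma *
  Rpower (U_CP D0 alpha pa pd ps pc) (1 - gamma).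

(* After the change of variables t = ps + pd (resp. t = pc + pa - pd), each
   firm faces the problem of a monopolist selling at margin t against the
   residual linear demand B - alpha t, where B depends only on the rival's price
   and on pd.  If B > 0 the unique optimal margin is B / (2 alpha), by the
   identity B^2 - 4 alpha (B - alpha t) t = (B - 2 alpha t)^2; if B <= 0 no
   margin earns a positive profit, so the optimal prices are exactly those with
   zero demand.  The two first-order conditions form a linear system in
   (ps, pc) whose solution shifts with pd while margins, demand and utilities
   do not. *)
From Stdlib Require Import Reals Lra Psatz.
Open Scope R_scope.

Definition monopoly_profit (a B t : R) : R := Rmax (B - a * t) 0 * t.

Definition monopoly_optimal (a B t : R) : Prop :=
  forall t', monopoly_profit a B t' <= monopoly_profit a B t.

Lemma Rmax_pos_iff (x : R) : 0 < Rmax x 0 <-> 0 < x.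
Proof. unfold Rmax; destruct (Rle_dec x 0); lra. Qed.

Lemma Rmax_eq0_iff (x : R) : Rmax x 0 = 0 <-> x <= 0.
Proof. unfold Rmax; destruct (Rle_dec x 0); lra. Qed.

Section MonopolyProfit.

Variables a B : R.
Hypothesis a_gt0 : 0 < a.

Lemma monopoly_profit_le_max (t : R) : 4 * a * monopoly_profit a B t <= B ^ 2.
Proof.
  unfold monopoly_profit, Rmax; destruct (Rle_dec (B - a * t) 0).
  - nra.
  - assert (0 <= (B - 2 * a * t) ^ 2) by apply pow2_ge_0. nra.
Qed.

Lemma monopoly_profit_nonpos (t : R) : B <= 0 -> monopoly_profit a B t <= 0.
Proof. intros; unfold monopoly_profit, Rmax; destruct (Rle_dec (B - a * t) 0); nra. Qed.

Lemma monopoly_profit_half (t : R) : 0 < B -> 2 * a * t = B ->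
  4 * a * monopoly_profit a B t = B ^ 2.
Proof. intros; unfold monopoly_profit; rewrite Rmax_left; nra. Qed.

Lemma monopoly_profit_zero_demand (t : R) : B <= a * t -> monopoly_profit a B t = 0.
Proof. intros; unfold monopoly_profit; rewrite Rmax_right; lra. Qed.

Lemma monopoly_optimal_iff (t : R) :
  monopoly_optimal a B t <-> (0 < B /\ 2 * a * t = B) \/ (B <= 0 /\ B <= a * t).
Proof.
  split.
  - intros opt; destruct (Rle_dec B 0) as [B_le0 | B_gt0].
    + right; split; [exact B_le0|].
      (* the zero margin earns 0, while positive demand at B <= 0 forces t < 0 *)
      pose proof (opt 0) as opt_zero; unfold monopoly_profit in *.
      rewrite Rmult_0_r in opt_zero; unfold Rmax in opt_zero.
      destruct (Rle_dec (B - a * t) 0); nra.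
    + left; split; [lra|].
      assert (opt_half : 4 * a * monopoly_profit a B (B / (2 * a))
                      <= 4 * a * monopoly_profit a B t)
        by (apply Rmult_le_compat_l; [lra | apply opt]).
      rewrite monopoly_profit_half in opt_half by (lra || (field; lra)).
      unfold monopoly_profit, Rmax in opt_half; destruct (Rle_dec (B - a * t) 0).
      * nra.
      * assert (0 <= (B - 2 * a * t) ^ 2) by apply pow2_ge_0. nra.
  - intros [[B_gt0 Ht] | [B_le0 Ht]] t'.
    + apply (Rmult_le_reg_l (4 * a)); [lra|].
      rewrite (monopoly_profit_half t) by assumption.
      apply monopoly_profit_le_max.
    + rewrite (monopoly_profit_zero_demand t Ht).
      now apply monopoly_profit_nonpos.
Qed.

End MonopolyProfit.

Section PricingGame.

Variables D0 a pa : R.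
Hypothesis a_gt0 : 0 < a.

Lemma U_ISP_monopoly (pd ps pc : R) :
  U_ISP D0 a pd ps pc = monopoly_profit a (D0 - a * pc + a * pd) (ps + pd).
Proof.
  unfold U_ISP, demand, monopoly_profit.
  now replace (D0 - a * pc + a * pd - a * (ps + pd)) with (D0 - a * (ps + pc)) by ring.
Qed.

Lemma U_CP_monopoly (pd ps pc : R) :
  U_CP D0 a pa pd ps pc = monopoly_profit a (D0 - a * ps + a * (pa - pd)) (pc + pa - pd).
Proof.
  unfold U_CP, demand, monopoly_profit.
  now replace (D0 - a * ps + a * (pa - pd) - a * (pc + pa - pd))
    with (D0 - a * (ps + pc)) by ring.
Qed.

Lemma NashEq_iff_monopoly_optimal (pd ps pc : R) :
  NashEq D0 a pa pd ps pc <->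
  monopoly_optimal a (D0 - a * pc + a * pd) (ps + pd) /\
  monopoly_optimal a (D0 - a * ps + a * (pa - pd)) (pc + pa - pd).
Proof.
  unfold NashEq, monopoly_optimal.
  split; intros [isp cp]; split; intros p.
  - specialize (isp (p - pd)); rewrite !U_ISP_monopoly in isp.
    now replace (p - pd + pd) with p in isp by ring.
  - specialize (cp (p - pa + pd)); rewrite !U_CP_monopoly in cp.
    now replace (p - pa + pd + pa - pd) with p in cp by ring.
  - rewrite !U_ISP_monopoly; apply isp.
  - rewrite !U_CP_monopoly; apply cp.
Qed.

Lemma NashEq_pos_demand_iff (pd ps pc : R) : 0 < D0 + a * pa ->
  NashEq D0 a pa pd ps pc /\ 0 < demand D0 a ps pc <->
  ps = (D0 + a * pa) / (3 * a) - pd /\ pc = (D0 - 2 * a * pa) / (3 * a) + pd.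
Proof.
  intros room.
  unfold demand; rewrite NashEq_iff_monopoly_optimal, !monopoly_optimal_iff, Rmax_pos_iff
    by assumption.
  assert (isp_margin : ps = (D0 + a * pa) / (3 * a) - pd <-> 3 * a * (ps + pd) = D0 + a * pa).
  { split; intros E; [subst ps; field; lra |].
    apply (Rmult_eq_reg_l (3 * a)); [rewrite Rmult_minus_distr_l; field_simplify |]; lra. }
  assert (cp_margin : pc = (D0 - 2 * a * pa) / (3 * a) + pd <-> 3 * a * (pc - pd) = D0 - 2 * a * pa).
  { split; intros E; [subst pc; field; lra |].
    apply (Rmult_eq_reg_l (3 * a)); [rewrite Rmult_plus_distr_l; field_simplify |]; lra. }
  rewrite isp_margin, cp_margin.
  split.
  - intros [[[[B1 F1] | [B1 F1]] [[B2 F2] | [B2 F2]]] pos]; lra.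
  - intros [E1 E2]; repeat split; try left; lra.
Qed.

Lemma NashEq_zero_demand_iff (pd ps pc : R) : 0 <= D0 + a * pa ->
  NashEq D0 a pa pd ps pc /\ demand D0 a ps pc = 0 <->
  ps >= D0 / a + pa - pd /\ pc >= D0 / a + pd.
Proof.
  intros room.
  unfold demand; rewrite NashEq_iff_monopoly_optimal, !monopoly_optimal_iff, Rmax_eq0_iff
    by assumption.
  assert (D0_eq : D0 = a * (D0 / a)) by (field; lra).
  set (k := D0 / a) in *; rewrite D0_eq in room |- *.
  split.
  - intros [[[[B1 F1] | [B1 F1]] [[B2 F2] | [B2 F2]]] zero]; try lra; split; nra.
  - intros [G1 G2]; split; [split; right; split|]; nra.
Qed.

End PricingGame.

Lemma Rpower_mult_complement (x g : R) : 0 < x -> Rpower x g * Rpower x (1 - g) = x.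
Proof.
  intros; rewrite <- Rpower_plus.
  replace (g + (1 - g)) with 1 by ring.
  now apply Rpower_1.
Qed.

Section Equilibrium.

Variables D0 a pa pd : R.
Hypothesis a_gt0 : 0 < a.
Hypothesis room : 0 < D0 + a * pa.

Let ps := (D0 + a * pa) / (3 * a) - pd.
Let pc := (D0 - 2 * a * pa) / (3 * a) + pd.

Lemma equilibrium_price_sum : ps + pc = (2 * D0 - a * pa) / (3 * a).
Proof. unfold ps, pc; field; lra. Qed.

Lemma equilibrium_demand : demand D0 a ps pc = (D0 + a * pa) / 3.
Proof.
  unfold demand; rewrite equilibrium_price_sum, Rmax_left; field_simplify; lra.
Qed.

Lemma equilibrium_U_ISP : U_ISP D0 a pd ps pc = (D0 + a * pa) ^ 2 / (9 * a).
Proof. unfold U_ISP; rewrite equilibrium_demand; unfold ps; field; lra. Qed.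

Lemma equilibrium_U_CP : U_CP D0 a pa pd ps pc = (D0 + a * pa) ^ 2 / (9 * a).
Proof. unfold U_CP; rewrite equilibrium_demand; unfold pc; field; lra. Qed.

Lemma equilibrium_NashProduct (gamma : R) :
  NashProduct D0 a pa gamma pd ps pc = (D0 + a * pa) ^ 2 / (9 * a).
Proof.
  unfold NashProduct; rewrite equilibrium_U_ISP, equilibrium_U_CP.
  apply Rpower_mult_complement, Rdiv_lt_0_compat; [apply pow_lt |]; lra.
Qed.

End Equilibrium.

Theorem theorem1 (D0 alpha pa gamma : R) :
  0 < D0 -> 0 < alpha -> 0 <= pa -> 0 < gamma < 1 ->
  (forall pd ps pc,
     (NashEq D0 alpha pa pd ps pc /\ 0 < demand D0 alpha ps pc) <->
     (ps = (D0 + alpha * pa) / (3 * alpha) - pd /\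
      pc = (D0 - 2 * alpha * pa) / (3 * alpha) + pd)) /\
  (forall pd ps pc,
     NashEq D0 alpha pa pd ps pc -> 0 < demand D0 alpha ps pc ->
     ps + pc = (2 * D0 - alpha * pa) / (3 * alpha) /\
     demand D0 alpha ps pc = (D0 + alpha * pa) / 3 /\
     0 < demand D0 alpha ps pc /\
     U_ISP D0 alpha pd ps pc = (D0 + alpha * pa) ^ 2 / (9 * alpha) /\
     U_CP D0 alpha pa pd ps pc = (D0 + alpha * pa) ^ 2 / (9 * alpha) /\
     NashProduct D0 alpha pa gamma pd ps pc = (D0 + alpha * pa) ^ 2 / (9 * alpha)) /\
  (forall pd ps pc pd' ps' pc',
     NashEq D0 alpha pa pd ps pc -> 0 < demand D0 alpha ps pc ->
     NashEq D0 alpha pa pd' ps' pc' -> 0 < demand D0 alpha ps' pc' ->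
     NashProduct D0 alpha pa gamma pd' ps' pc' <= NashProduct D0 alpha pa gamma pd ps pc) /\
  (forall pd ps pc,
     (NashEq D0 alpha pa pd ps pc /\ demand D0 alpha ps pc = 0) <->
     (ps >= D0 / alpha + pa - pd /\ pc >= D0 / alpha + pd)).
Proof.
  intros D0_gt0 alpha_gt0 pa_ge0 _.
  assert (room : 0 < D0 + alpha * pa) by nra.
  pose proof (NashEq_pos_demand_iff D0 alpha pa alpha_gt0) as pos_eq.
  split; [|split; [|split]].
  - intros; now apply pos_eq.
  - intros pd ps pc eq pos.
    destruct (proj1 (pos_eq pd ps pc room) (conj eq pos)) as [-> ->].
    rewrite equilibrium_price_sum, equilibrium_demand, equilibrium_U_ISP, equilibrium_U_CP,
      equilibrium_NashProduct by lra.
    repeat split; lra.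
  - intros pd ps pc pd' ps' pc' eq pos eq' pos'.
    destruct (proj1 (pos_eq pd ps pc room) (conj eq pos)) as [-> ->].
    destruct (proj1 (pos_eq pd' ps' pc' room) (conj eq' pos')) as [-> ->].
    rewrite !equilibrium_NashProduct by lra.
    apply Rle_refl.
  - intros; apply NashEq_zero_demand_iff; lra.
Qed.
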